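(* Suppose $X_1,X_2\in\mathcal L^2$ have the same distribution. Then $(X_1,X_2)\in\mathrm{IC}_0$ if and only if its random rearrangement $(X_{\pi_1},X_{\pi_2})$ is independent.
   Context: $\mathcal L^2$ is the set of non-degenerate real random variables with finite variance. $(X,Y)\in\mathrm{IC}_0$ means $\mathrm{Corr}(g(X),g(Y))=0=\mathrm{Corr}(X,Y)$ for every measurable $g$ with $g(X),g(Y)\in\mathcal L^2$. Let $(\pi_1,\pi_2)$ be uniformly distributed on $\{(1,2),(2,1)\}$ and independent of $(X_1,X_2)$; the random rearrangement of $(X_1,X_2)$ is $(X_{\pi_1},X_{\pi_2})$, whose law is the equal mixture of the laws of $(X_1,X_2)$ and $(X_2,X_1)$. *)

From HB Require Import structures.
From mathcomp Require Import all_boot all_order all_algebra.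
From mathcomp Require Import all_classical all_reals all_analysis.
Set Implicit Arguments. Unset Strict Implicit. Unset Printing Implicit Defensive.
Import Order.TTheory GRing.Theory Num.Theory.
Local Open Scope classical_set_scope.
Local Open Scope ring_scope.

Section defs.
Context {d : measure_display} {T : measurableType d} {R : realType}.
Variable P : probability T R.

Definition corr (X Y : T -> R) : R :=
  fine (covariance P X Y) /
    Num.sqrt (fine (variance P X) * fine (variance P Y)).

Definition inL2 (X : T -> R) : Prop :=
  X \in Lfun P 2%:E /\ ~ (exists c : R, P [set t | X t = c] = 1%E).

Definition IC0 (X Y : T -> R) : Prop :=
  (forall g : R -> R, measurable_fun setT g ->
     inL2 (g \o X) -> inL2 (g \o Y) -> corr (g \o X) (g \o Y) = 0)
  /\ corr X Y = 0.

(* Law of the random rearrangement (X_{pi_1}, X_{pi_2}) evaluated on the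
   rectangle A x B: the equal mixture of the laws of (X1,X2) and (X2,X1). *)
Definition rearr_law (X1 X2 : T -> R) (A B : set R) : \bar R :=
  ((P (X1 @^-1` A `&` X2 @^-1` B) + P (X2 @^-1` A `&` X1 @^-1` B))
    * (2^-1)%:E)%E.

Definition rearr_indep (X1 X2 : T -> R) : Prop :=
  forall A B : set R, measurable A -> measurable B ->
    rearr_law X1 X2 A B = (rearr_law X1 X2 A setT * rearr_law X1 X2 setT B)%E.
End defs.

From HB Require Import structures.
From mathcomp Require Import all_boot all_order all_algebra.
From mathcomp Require Import all_classical all_reals all_analysis.
From mathcomp Require Import lra measurable_realfun.

(* Write nu for the law of the random rearrangement, the average of the laws
   of (X1, X2) and (X2, X1).  Both marginals of nu are the common law mu of X1
   and X2, so independence of the rearrangement means nu = mu \x mu.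
   If nu = mu \x mu, then E h(X1, X2) = int h dnu = int h d(mu \x mu) for every
   symmetric h; for h(x, y) = g x * g y Fubini turns the right-hand side into
   (int g dmu)^2 = E g(X1) * E g(X2), so all covariances Cov(g(X1), g(X2)), and
   with them all correlations, vanish.
   Conversely, a vanishing correlation forces a vanishing covariance (through
   Cauchy-Schwarz when a variance is zero), and a degenerate g(X1) has zero
   covariance anyway.  For g = 1_A, 1_B and 1_A + 1_B bilinearity then leaves
   P(X1 in A, X2 in B) + P(X1 in B, X2 in A) = 2 mu(A) mu(B), i.e.
   nu(A x B) = mu(A) mu(B). *)

Set Implicit Arguments. Unset Strict Implicit. Unset Printing Implicit Defensive.
Import Order.TTheory GRing.Theory Num.Theory.
Local Open Scope classical_set_scope.
Local Open Scope ring_scope.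

Lemma addee_half (R : realFieldType) (x : \bar R) : ((x + x) * (2^-1)%:E)%E = x.
Proof.
case: x => [r| |] /=.
- by rewrite -EFinD -EFinM mulrDl -splitr.
- by rewrite gt0_mulye // lte_fin invr_gt0.
- by rewrite gt0_mulNye // lte_fin invr_gt0.
Qed.

Lemma indic_preimage (aT rT : Type) (R : pzRingType) (f : aT -> rT) (C : set rT) :
  \1_(f @^-1` C) = \1_C \o f :> (aT -> R).
Proof. by []. Qed.

Section covariance_facts.
Local Open Scope ereal_scope.
Context d (T : measurableType d) (R : realType) (P : probability T R).

Let PT_fin : P setT \is a fin_num := fin_num_measure P _ measurableT.

Lemma Lfun2_covarianceE (X Y : T -> R) : X \in Lfun P 2%:E -> Y \in Lfun P 2%:E ->
  covariance P X Y = 'E_P[X * Y] - 'E_P[X] * 'E_P[Y].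
Proof.
move=> X2 Y2; apply: covarianceE; last exact: Lfun2_mul_Lfun1.
- exact: (Lfun_subset12 PT_fin X2).
- exact: (Lfun_subset12 PT_fin Y2).
Qed.

Lemma bounded_Lfun2 (f : T -> R) (M : R) : measurable_fun setT f ->
  (forall t, `|f t| <= M)%R -> f \in Lfun P 2%:E.
Proof.
move=> mf fM; rewrite inE; apply/andP; split; rewrite inE //=.
rewrite /finite_norm unlock /= poweR_lty //.
apply: (@le_lt_trans _ _ (\int[P]_x (M `^ 2)%:E)); last first.
  by rewrite integral_cst // ltey_eq fin_numM.
apply: ge0_le_integral => //= [|t _].
- apply/measurable_EFinP; apply: (measurableT_comp (measurable_powR _)).
  exact: measurableT_comp.
- rewrite lee_fin; apply: ge0_ler_powR => //.
  by rewrite nnegrE (le_trans (normr_ge0 (f t)) (fM t)).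
Qed.

Lemma indic_Lfun2 (A : set T) : measurable A -> \1_A \in Lfun P 2%:E.
Proof.
move=> mA; apply: (@bounded_Lfun2 _ 1%R); first exact: measurable_indic.
by move=> t; rewrite indicE; case: (t \in A); rewrite ?normr1 ?normr0.
Qed.

Lemma covariance_indic (A B : set T) : measurable A -> measurable B ->
  covariance P \1_A \1_B = (fine (P (A `&` B)) - fine (P A) * fine (P B))%:E.
Proof.
move=> mA mB; have mAB := measurableI _ _ mA mB.
rewrite Lfun2_covarianceE ?indic_Lfun2 //.
have -> : (\1_A * \1_B)%R = \1_(A `&` B) :> (T -> R) by rewrite indicI.
by rewrite !expectation_indic // EFinB EFinM !fineK ?fin_num_measure.
Qed.

Lemma indic_comp_Lfun2 (X : {RV P >-> R}) (C : set R) :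
  measurable C -> \1_C \o X \in Lfun P 2%:E.
Proof. by move=> mC; rewrite -indic_preimage; exact/indic_Lfun2/measurable_funPTI. Qed.

Lemma covariance_indic_comp (X Y : {RV P >-> R}) (C D : set R) :
  measurable C -> measurable D ->
  covariance P (\1_C \o X) (\1_D \o Y) =
  (fine (P (X @^-1` C `&` Y @^-1` D)) -
   fine (distribution P X C) * fine (distribution P Y D))%:E.
Proof.
move=> mC mD; rewrite -!indic_preimage.
exact: covariance_indic (measurable_funPTI _ mC) (measurable_funPTI _ mD).
Qed.

Let expectation_ae_eq (U V : T -> R) :
  measurable_fun setT U -> measurable_fun setT V ->
  (\forall t \ae P, U t = V t) -> 'E_P[U] = 'E_P[V].
Proof.
move=> mU mV UV; rewrite !unlock; apply: ae_eq_integral => //.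
- exact/measurable_EFinP.
- exact/measurable_EFinP.
- by apply: filterS UV => t ->.
Qed.

Lemma covariance_ae_cst_l (Y Z : T -> R) (c : R) :
  measurable_fun setT Y -> measurable_fun setT Z ->
  P [set t | Y t = c] = 1 -> covariance P Y Z = 0.
Proof.
move=> mY mZ PYc.
have mYc : measurable [set t | Y t = c].
  by rewrite -[X in measurable X]setTI; exact: mY measurableT _ (measurable_set1 c).
have Yc : \forall t \ae P, Y t = c.
  exists (~` [set t | Y t = c]); split => //; first exact: measurableC.
  by rewrite probability_setC // PYc subee.
have EY : 'E_P[Y] = c%:E.
  by rewrite -(expectation_cst P c); apply: expectation_ae_eq.
rewrite unlock EY; apply: etrans (expectation_cst P 0%R).
apply: expectation_ae_eq => //.
- by apply: measurable_funM; apply: measurable_funB.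
- by apply: filterS Yc => t Yt; rewrite fctE /= Yt subrr mul0r.
Qed.

Lemma corr_eq0_covariance (Y Z : T -> R) :
  Y \in Lfun P 2%:E -> Z \in Lfun P 2%:E ->
  corr P Y Z = 0%R -> covariance P Y Z = 0.
Proof.
move=> Y2 Z2; have [Y1 Z1] := (Lfun_subset12 PT_fin Y2, Lfun_subset12 PT_fin Z2).
have YZ1 := Lfun2_mul_Lfun1 Y2 Z2.
rewrite /corr => /eqP; rewrite mulf_eq0 invr_eq0 sqrtr_eq0 => /orP[/eqP cov0|VYZ].
  by rewrite -(fineK (covariance_fin_num Y1 Z1 YZ1)) cov0.
have sdYZ0 : sqrte 'V_P[Y] * sqrte 'V_P[Z] = 0.
  rewrite -sqrteM ?variance_ge0 // -(fineK (variance_fin_num Y2)).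
  rewrite -(fineK (variance_fin_num Z2)) -EFinM.
  suff -> : (fine 'V_P[Y] * fine 'V_P[Z] = 0)%R by rewrite sqrte0.
  by apply/le_anti; rewrite VYZ mulr_ge0 // fine_ge0 // variance_ge0.
apply/le_anti; rewrite -{1}sdYZ0 covariance_le //=.
rewrite -oppe_le0 -covarianceNl // -sdYZ0 -(varianceN Y2).
by rewrite covariance_le ?rpredN.
Qed.

End covariance_facts.

Section identically_distributed.
Local Open Scope ereal_scope.
Context d (T : measurableType d) (R : realType) (P : probability T R).
Variables X1 X2 : {RV P >-> R}.
Hypothesis X12 : distribution P X1 = distribution P X2.

Lemma ge0_integral_comp_eq_distribution (F : R -> \bar R) :
  measurable_fun setT F -> (forall x, 0 <= F x) ->
  \int[P]_t (F \o X1) t = \int[P]_t (F \o X2) t.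
Proof. by move=> mF F0; rewrite -!ge0_integral_distribution // X12. Qed.

Lemma Lfun_comp_eq_distribution (g : R -> R) (r : R) : measurable_fun setT g ->
  g \o X1 \in Lfun P r%:E -> g \o X2 \in Lfun P r%:E.
Proof.
move=> mg /andP[_]; rewrite !inE /= /finite_norm unlock /= => g1_fin.
apply/andP; split; rewrite inE /=; first exact: measurableT_comp.
rewrite /finite_norm unlock /=.
rewrite -(@ge0_integral_comp_eq_distribution (fun y => `|(g y)%:E| `^ r)) //.
- apply: (measurableT_comp (measurable_poweR _)).
  by apply: measurableT_comp => //; exact/measurable_EFinP.
- by move=> y; exact: poweR_ge0.
Qed.

Lemma inL2_comp_eq_distribution (g : R -> R) : measurable_fun setT g ->
  inL2 P (g \o X1) -> inL2 P (g \o X2).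
Proof.
move=> mg [g1_L2 g1_ndeg]; split; first exact: Lfun_comp_eq_distribution.
move=> [c g2c]; apply: g1_ndeg; exists c; rewrite -g2c.
exact: (congr1 (fun mu => mu (g @^-1` [set c])) X12).
Qed.

End identically_distributed.

Section integral_product_measure.
Local Open Scope ereal_scope.
Context d1 d2 (T1 : measurableType d1) (T2 : measurableType d2) (R : realType).
Variables (m1 : {sigma_finite_measure set T1 -> \bar R})
  (m2 : {sigma_finite_measure set T2 -> \bar R}).

Lemma integral_prod_meas_mul (f : T1 -> R) (g : T2 -> R) :
  m1.-integrable setT (EFin \o f) -> m2.-integrable setT (EFin \o g) ->
  (m1 \x m2).-integrable setT (fun z => (f z.1 * g z.2)%:E) ->
  \int[m1 \x m2]_z (f z.1 * g z.2)%:E = \int[m1]_x (f x)%:E * \int[m2]_y (g y)%:E.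
Proof.
move=> m1f m2g m12fg; rewrite -integral12_prod_meas1 // /fubini_F.
under eq_integral => x _.
  under eq_integral => y _ do rewrite /= EFinM.
  rewrite integralZl //.
  over.
by rewrite -(fineK (integrable_fin_num measurableT m2g)) integralZr.
Qed.

End integral_product_measure.

Section rearrangement.
Local Open Scope ereal_scope.
Context d (T : measurableType d) (R : realType) (P : probability T R).
Variables X1 X2 : {RV P >-> R}.

Definition pair_rv (X Y : {RV P >-> R}) (t : T) : R * R := (X t, Y t).

HB.instance Definition _ (X Y : {RV P >-> R}) := isMeasurableFun.Build _ _ _ _
  (pair_rv X Y) (measurable_fun_pair (measurable_funPT X) (measurable_funPT Y)).

Definition rearr_measure := mscale (2^-1)%:nng%R
  (measure_add (distribution P (pair_rv X1 X2)) (distribution P (pair_rv X2 X1))).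

Lemma rearr_lawE A B : rearr_law P X1 X2 A B = rearr_measure (A `*` B).
Proof.
by rewrite /rearr_law /rearr_measure /mscale /= /msum 2!big_ord_recl big_ord0 adde0 muleC.
Qed.

Lemma ge0_integral_rearr_measure (F : R * R -> \bar R) :
  measurable_fun setT F -> (forall z, 0 <= F z) ->
  (forall x y, F (x, y) = F (y, x)) ->
  \int[rearr_measure]_z F z = \int[P]_t F (X1 t, X2 t).
Proof.
move=> mF F0 Fsym; rewrite ge0_integral_mscale //= ge0_integral_measure_add //.
rewrite !ge0_integral_distribution //.
have -> : \int[P]_t (F \o pair_rv X2 X1) t = \int[P]_t (F \o pair_rv X1 X2) t.
  by apply: eq_integral => t _; exact: Fsym.
by rewrite muleC addee_half.
Qed.

Hypothesis X12 : distribution P X1 = distribution P X2.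
Let mu := distribution P X1.

Lemma rearr_law_setTr A : rearr_law P X1 X2 A setT = mu A.
Proof.
rewrite /rearr_law !preimage_setT !setIT.
by rewrite (_ : P (X2 @^-1` A) = mu A) ?addee_half // /mu X12.
Qed.

Lemma rearr_law_setTl B : rearr_law P X1 X2 setT B = mu B.
Proof.
rewrite /rearr_law !preimage_setT !setTI.
by rewrite (_ : P (X2 @^-1` B) = mu B) ?addee_half // /mu X12.
Qed.

Hypothesis indep : rearr_indep P X1 X2.

Lemma rearr_indep_product_measure E :
  measurable E -> (mu \x mu) E = rearr_measure E.
Proof.
move=> mE; apply: product_measure_unique mE => A B mA mB.
change (rearr_measure (A `*` B) = mu A * mu B).
by rewrite -rearr_lawE indep // rearr_law_setTr rearr_law_setTl.
Qed.

Lemma ge0_integral_pair_product (F : R * R -> \bar R) :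
  measurable_fun setT F -> (forall z, 0 <= F z) ->
  (forall x y, F (x, y) = F (y, x)) ->
  \int[P]_t F (X1 t, X2 t) = \int[mu \x mu]_z F z.
Proof.
move=> mF F0 Fsym; rewrite -ge0_integral_rearr_measure //.
by apply: eq_measure_integral => E mE _; exact/esym/rearr_indep_product_measure.
Qed.

Lemma integral_pair_product (k : R * R -> R) : measurable_fun setT k ->
  (forall x y, k (x, y) = k (y, x)) ->
  \int[P]_t (k (X1 t, X2 t))%:E = \int[mu \x mu]_z (k z)%:E.
Proof.
move=> mk ksym; have mEk : measurable_fun setT (EFin \o k) by exact/measurable_EFinP.
rewrite -[X in \int[P]_t X t]/((EFin \o k) \o pair_rv X1 X2).
rewrite integralE [RHS]integralE funepos_comp funeneg_comp; congr (_ - _).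
- rewrite -(ge0_integral_pair_product (measurable_funepos mEk)) // => x y.
  by rewrite !funeposE /= ksym.
- rewrite -(ge0_integral_pair_product (measurable_funeneg mEk)) // => x y.
  by rewrite !funenegE /= ksym.
Qed.

Lemma integrable_pair_product (k : R * R -> R) : measurable_fun setT k ->
  (forall x y, k (x, y) = k (y, x)) ->
  P.-integrable setT (fun t => (k (X1 t, X2 t))%:E) ->
  (mu \x mu).-integrable setT (EFin \o k).
Proof.
move=> mk ksym /integrableP[_ k12_fin].
apply/integrableP; split; first exact/measurable_EFinP.
rewrite -(@ge0_integral_pair_product (fun z => `|(k z)%:E|)) //.
- by apply: measurableT_comp => //; exact/measurable_EFinP.
- by move=> x y; rewrite ksym.
Qed.

Lemma rearr_indep_covariance_comp (g : R -> R) : measurable_fun setT g ->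
  g \o X1 \in Lfun P 2%:E -> g \o X2 \in Lfun P 2%:E ->
  covariance P (g \o X1) (g \o X2) = 0.
Proof.
move=> mg g1_L2 g2_L2.
have PT_fin : P setT \is a fin_num := fin_num_measure P _ measurableT.
have mu_g : mu.-integrable setT (EFin \o g).
  apply: integrable_pushforward => //; first exact/measurable_EFinP.
  exact/Lfun1_integrable/(Lfun_subset12 PT_fin).
have E_g (X : {RV P >-> R}) : distribution P X = mu -> g \o X \in Lfun P 2%:E ->
    'E_P[g \o X] = \int[mu]_x (g x)%:E.
  move=> <- gX_L2; rewrite unlock integral_distribution //.
    exact/measurable_EFinP.
  exact/Lfun1_integrable/(Lfun_subset12 PT_fin).
pose k z := (g z.1 * g z.2)%R.
have mk : measurable_fun setT k by apply: measurable_funM; exact: measurableT_comp.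
have ksym x y : k (x, y) = k (y, x) by rewrite /k mulrC.
have k12_int : P.-integrable setT (fun t => (k (X1 t, X2 t))%:E).
  exact/Lfun1_integrable/Lfun2_mul_Lfun1.
rewrite Lfun2_covarianceE // E_g // E_g // -?X12 //.
rewrite unlock (integral_pair_product mk ksym).
rewrite integral_prod_meas_mul ?integrable_pair_product //.
by rewrite subee // fin_numM // integrable_fin_num.
Qed.

End rearrangement.

Section uncorrelated_transforms.
Local Open Scope ereal_scope.
Context d (T : measurableType d) (R : realType) (P : probability T R).
Variables X1 X2 : {RV P >-> R}.
Hypothesis X12 : distribution P X1 = distribution P X2.
Hypothesis IC : IC0 P X1 X2.

Lemma IC0_covariance_comp (g : R -> R) : measurable_fun setT g ->
  g \o X1 \in Lfun P 2%:E -> covariance P (g \o X1) (g \o X2) = 0.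
Proof.
move=> mg g1_L2; have g2_L2 := Lfun_comp_eq_distribution X12 mg g1_L2.
have [mg1 mg2] : measurable_fun setT (g \o X1) /\ measurable_fun setT (g \o X2).
  by split; exact: measurableT_comp.
(* IC0 only constrains non-degenerate g(X1); a degenerate one is uncorrelated anyway. *)
have [[c g1c]|g1_ndeg] := pselect (exists c, P [set t | (g \o X1) t = c] = 1).
  exact: covariance_ae_cst_l g1c.
have g1_inL2 : inL2 P (g \o X1) by [].
apply: corr_eq0_covariance => //.
exact: IC.1 _ mg g1_inL2 (inL2_comp_eq_distribution X12 mg g1_inL2).
Qed.

Lemma IC0_rearr_indep : rearr_indep P X1 X2.
Proof.
move=> A B mA mB; rewrite rearr_law_setTr // rearr_law_setTl //.
have sum_L2 (X : {RV P >-> R}) : (\1_A + \1_B)%R \o X \in Lfun P 2%:E.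
  by apply: (Lfun_addr_closed P (lee1n 2)).2; exact: indic_comp_Lfun2.
have := IC0_covariance_comp (measurable_funD (measurable_indic mA) (measurable_indic mB))
  (sum_L2 X1).
(* By bilinearity, only the two cross covariances of 1_A and 1_B survive. *)
rewrite -[X in X = 0]/(covariance P ((\1_A \o X1) \+ (\1_B \o X1))%R
  ((\1_A \o X2) \+ (\1_B \o X2))%R).
rewrite covarianceDl ?covarianceDr ?sum_L2 ?indic_comp_Lfun2 //.
rewrite !IC0_covariance_comp ?indic_comp_Lfun2 ?measurable_indic // add0e adde0.
rewrite !covariance_indic_comp // -!X12 -EFinD => /eqP; rewrite eqe => /eqP cross0.
have [fAB fBA] : P (X1 @^-1` A `&` X2 @^-1` B) \is a fin_num /\
                 P (X2 @^-1` A `&` X1 @^-1` B) \is a fin_num.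
  by split; apply/fin_num_measure/measurableI; exact: measurable_funPTI.
rewrite /rearr_law -(fineK fAB) -(fineK fBA).
rewrite -[distribution P X1 A]fineK ?fin_num_measure //.
rewrite -[distribution P X1 B]fineK ?fin_num_measure //.
rewrite -EFinD -!EFinM; congr EFin.
by rewrite [X1 @^-1` B `&` _]setIC in cross0; lra.
Qed.

End uncorrelated_transforms.

Theorem proposition2 (d : measure_display) (T : measurableType d)
  (R : realType) (P : probability T R) (X1 X2 : {RV P >-> R}) :
  inL2 P X1 -> inL2 P X2 ->
  distribution P X1 = distribution P X2 ->
  (IC0 P X1 X2 <-> rearr_indep P X1 X2).
Proof.
move=> [X1_L2 _] [X2_L2 _] X12; split; first exact: IC0_rearr_indep.
move=> indep; have cov0 := rearr_indep_covariance_comp X12 indep.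
split => [g mg [g1_L2 _] [g2_L2 _]|]; rewrite /corr.
  by rewrite cov0 // mul0r.
by rewrite (_ : covariance P X1 X2 = 0) ?mul0r //; exact: (cov0 id).
Qed.
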